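(* Let $R$ be a commutative ring with unit, let $G=(V,E)$ be a finite digraph and $f:V\to[0,+\infty)$ a discrete Morse function on $G$ such that every vertex $v$ with $f(v)=0$ has out-degree $1$ and in-degree $1$. Let $\tilde G$ be the $\mathcal M$-collapse of $(G,f)$. Then the inclusion $i:\tilde G\to G$ induces isomorphisms $H_n(\tilde G;R)\xrightarrow{\cong}H_n(G;R)$ of path homology groups for all $n\ge0$.
   Context: A digraph $G=(V,E)$ consists of a set $V$ and $E\subseteq (V\times V)\setminus\{(v,v)\}$; $(u,v)\in E$ is written $u\to v$. The out-degree (in-degree) of $v$ is the number of edges starting (ending) at $v$. An allowed elementary $n$-path is a sequence $v_0\cdots v_n$ of vertices with $v_{i-1}\to v_i\in E$ for all $1\le i\le n$. For $n\ge0$, $\Lambda_n(V)$ is the free $R$-module on sequences $v_0\cdots v_n$ with $v_{i-1}\ne v_i$, with $\partial_n=\sum_{i=0}^n(-1)^id_i$, $d_i$ deleting $v_i$ and sequences with two equal consecutive entries taken to be $0$. $P_n(G)$ is the span of allowed elementary $n$-paths, $\Omega_n(G)=\{x\in P_n(G):\partial_nx\in P_{n-1}(G)\}$, and the path homology $H_n(G;R)$ is the homology of $(\Omega_*(G),\partial_* )$. For a subdigraph $\tilde G\subseteq G$, the inclusion induces the inclusion of chain complexes $\Omega_*(\tilde G)\subseteq\Omega_*(G)$ and hence maps on path homology. A map $f:V\to[0,+\infty)$ is a discrete Morse function on $G$ if for every allowed elementary path $v_0\cdots v_n$: (i) there is at most one index $i$ with $f(v_i)=0$ such that $v_0\cdots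 v_{i-1}v_{i+1}\cdots v_n$ is an allowed elementary path; (ii) there is at most one vertex $u$ with $f(u)=0$ such that for some $-1\le j\le n$, $v_0\cdots v_juv_{j+1}\cdots v_n$ (meaning $uv_0\cdots v_n$ if $j=-1$, $v_0\cdots v_nu$ if $j=n$) is an allowed elementary path. $\mathcal M$-collapse: under the degree hypothesis, each vertex $v$ with $f(v)=0$ has a unique in-neighbour $u$ and out-neighbour $w$ ($u\to v\to w$, with $u,v,w$ distinct). Let $Z$ be the set of zeros $v$ of $f$ for which $u\to w$ is also an edge of $G$. The $\mathcal M$-collapse $\tilde G$ has vertex set $V\setminus Z$ and edge set $E\setminus\{u\to v,\ v\to w: v\in Z\}$ (obtained by successively substituting each such $u\to v\to w$ by $u\to w$), and $\tilde f=f|_{V\setminus Z}$. *)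

From HB Require Import structures.
From mathcomp Require Import all_boot all_order all_algebra.
From mathcomp Require Import reals.
Set Implicit Arguments. Unset Strict Implicit. Unset Printing Implicit Defensive.
Import Order.TTheory GRing.Theory Num.Theory.
Local Open Scope ring_scope.

Section PathHomology.
Variables (R : comPzRingType) (V : finType).

(* Sequences with no two equal consecutive entries (basis of Lambda_n). *)
Definition regular (s : seq V) : bool := sorted (fun a b => a != b) s.

Definition allowed (Vs : pred V) (E : rel V) (s : seq V) : bool :=
  [&& (0 < size s)%N, all Vs s & sorted E s].

Definition delete_at (i : nat) (s : seq V) : seq V := take i s ++ drop i.+1 s.
(* insert u so that it becomes the k-th entry (k = j+1, -1 <= j <= n) *)
Definition insert_at (k : nat) (u : V) (s : seq V) : seq V :=
  take k s ++ u :: drop k s.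

Definition chain (n : nat) := {ffun n.+1.-tuple V -> R}.

Definition inLambda n (c : chain n) : Prop := forall t, c t != 0 -> regular t.

Definition inP (Vs : pred V) (E : rel V) n (c : chain n) : Prop :=
  forall t, c t != 0 -> allowed Vs E t.

(* boundary  d_{n+1} = sum_i (-1)^i d_i on Lambda_{n+1}, sequences with two
   equal consecutive entries being taken to be 0 *)
Definition bd n (c : chain n.+1) : chain n :=
  [ffun w : n.+1.-tuple V =>
     if regular w then
       \sum_(t : n.+2.-tuple V | regular t) \sum_(i < n.+2)
          ((-1) ^+ i * c t) *+ (delete_at i t == w)
     else 0].

Definition bdn n : chain n -> chain n.-1 :=
  match n return chain n -> chain n.-1 with
  | 0 => fun _ => 0
  | n'.+1 => fun c => bd c
  end.

Definition inOmega (Vs : pred V) (E : rel V) n (c : chain n) : Prop :=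
  inP Vs E c /\ inP Vs E (bdn c).

(* For a subdigraph (Vs', E') of (Vs, E): the map H_n(G') -> H_n(G) induced by
   the inclusion Omega_*(G') ⊆ Omega_*(G) is bijective (hence an R-module
   isomorphism, being R-linear). Written out: surjective and injective on
   homology classes. *)
Definition inclusion_iso_Hn (Vs' : pred V) (E' : rel V)
    (Vs : pred V) (E : rel V) (n : nat) : Prop :=
  (forall z : chain n, inOmega Vs E z -> bdn z = 0 ->
     exists (z' : chain n) (w : chain n.+1),
       [/\ inOmega Vs' E' z', bdn z' = 0, inOmega Vs E w & z = z' + bd w])
  /\
  (forall (z' : chain n) (w : chain n.+1),
     inOmega Vs' E' z' -> bdn z' = 0 -> inOmega Vs E w -> z' = bd w ->
     exists w' : chain n.+1, inOmega Vs' E' w' /\ z' = bd w').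

End PathHomology.

Section Morse.
Variables (Rr : realType) (V : finType).

Definition Morse_cond_i (E : rel V) (f : V -> Rr) (s : seq V) : Prop :=
  match s with
  | [::] => True
  | x0 :: _ =>
    forall i1 i2 : nat, (i1 < size s)%N -> (i2 < size s)%N ->
      f (nth x0 s i1) = 0 -> allowed predT E (delete_at i1 s) ->
      f (nth x0 s i2) = 0 -> allowed predT E (delete_at i2 s) ->
      i1 = i2
  end.

Definition Morse_cond_ii (E : rel V) (f : V -> Rr) (s : seq V) : Prop :=
  forall u1 u2 : V,
    f u1 = 0 -> (exists k, (k <= size s)%N /\ allowed predT E (insert_at k u1 s)) ->
    f u2 = 0 -> (exists k, (k <= size s)%N /\ allowed predT E (insert_at k u2 s)) ->
    u1 = u2.

Definition discrete_Morse (E : rel V) (f : V -> Rr) : Prop :=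
  (forall v, 0 <= f v) /\
  (forall s : seq V, allowed predT E s -> Morse_cond_i E f s /\ Morse_cond_ii E f s).

Definition outdeg (E : rel V) (v : V) : nat := #|[set w | E v w]|.
Definition indeg (E : rel V) (v : V) : nat := #|[set u | E u v]|.

Definition collapse_Z (E : rel V) (f : V -> Rr) : pred V :=
  fun v => (f v == 0) && [exists u, exists w, [&& E u v, E v w & E u w]].

(* Under
   the degree hypothesis the removed edges are exactly the edges of E with an
   endpoint in Z (the u -> v with v in Z and the v -> w with v in Z). *)
Definition collapse_V (E : rel V) (f : V -> Rr) : pred V :=
  predC (collapse_Z E f).
Definition collapse_E (E : rel V) (f : V -> Rr) : rel V :=
  fun x y => E x y && ~~ ((y \in collapse_Z E f) || (x \in collapse_Z E f)).
End Morse.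

From mathcomp Require Import all_boot all_order all_algebra reals zify ring.
Import GRing.Theory Num.Theory.
Local Open Scope ring_scope.
Set Implicit Arguments. Unset Strict Implicit. Unset Printing Implicit Defensive.

(* A vertex v of Z has a unique in-neighbour u and a unique out-neighbour w, and u -> w.
   If an allowed path in the support of a d-invariant chain had two vertices x -> u
   before v, deleting u would give a face x v that is not allowed; as u is the only
   detour from x to v, no other path of the support has this face, so the boundary
   would leave P.  The same holds for two vertices v -> w -> y after v.  Hence vertices
   of Z occur in Omega(G) only in the paths u v, v w and u v w, and Omega_n(G~) =
   Omega_n(G) for n >= 3.  In degrees 0 and 1 a cycle is pushed off Z by subtracting
   the boundary of its cone, which prepends u to every path starting at v; in degrees
   1 and 2 a d-invariant chain whose boundary avoids Z avoids Z itself. *)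

Section Sequences.
Variable T : finType.
Implicit Types (x : T) (s : seq T).

Lemma delete_at0 x s : delete_at 0 (x :: s) = s.
Proof. by rewrite /delete_at /= drop0. Qed.

Lemma delete_atS i x s : delete_at i.+1 (x :: s) = x :: delete_at i s.
Proof. by []. Qed.

Lemma nth_delete_at x0 i s j :
  nth x0 (delete_at i s) j = nth x0 s (if (j < i)%N then j else j.+1).
Proof.
elim: s i j => [|x s IHs] [|i] [|j] //; rewrite ?delete_at0 //= ?nth_nil //.
by rewrite IHs ltnS; case: ifP.
Qed.

Lemma size_delete_at i s : (i < size s)%N -> size (delete_at i s) = (size s).-1.
Proof. by move=> lt_is; rewrite size_cat size_take size_drop lt_is; lia. Qed.

Lemma mem_delete_at i s x : x \in delete_at i s -> x \in s.
Proof. by rewrite mem_cat => /orP [/mem_take|/mem_drop]. Qed.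

Lemma regular_delete_at x0 s j :
  regular s -> (0 < j)%N -> (j.+1 < size s)%N ->
  nth x0 s j.-1 != nth x0 s j.+1 -> regular (delete_at j s).
Proof.
move=> /(sortedP x0) reg_s j_gt0 lt_js neq_nb; apply/(sortedP x0) => m.
rewrite size_delete_at => [lt_m|]; last exact: ltnW.
rewrite !nth_delete_at.
case: ltnP => [lt_m1j|le_jm1]; case: ltnP => [lt_mj|le_jm].
all: try (by apply: reg_s; lia); try lia.
have -> : m = j.-1 by lia.
by rewrite prednK.
Qed.

Lemma exists_tuple1 (t : 1.-tuple T) : exists x, t = [tuple x].
Proof. by case: t => [[|x []] //= ht]; exists x; apply: val_inj. Qed.

Lemma exists_tuple2 (t : 2.-tuple T) : exists x y, t = [tuple x; y].
Proof. by case: t => [[|x [|y []]] //= ht]; exists x, y; apply: val_inj. Qed.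

Lemma exists_tuple3 (t : 3.-tuple T) : exists x y z, t = [tuple x; y; z].
Proof. by case: t => [[|x [|y [|z []]]] //= ht]; exists x, y, z; apply: val_inj. Qed.

End Sequences.

Section Boundary.
Variables (R : comPzRingType) (V : finType).
Local Notation chain := (chain R V).

Lemma chainBE n (a b : chain n) t : (a - b) t = a t - b t.
Proof. by rewrite !ffunE. Qed.

Lemma bd0 n : bd (0 : chain n.+1) = 0.
Proof.
apply/ffunP => s; rewrite !ffunE; case: ifP => // _.
by rewrite big1 // => t _; rewrite big1 // => i _; rewrite ffunE mulr0 mul0rn.
Qed.

Lemma bdB n (a b : chain n.+1) : bd (a - b) = bd a - bd b.
Proof.
apply/ffunP => s; rewrite !ffunE; case: ifP => _; last by rewrite subr0.
rewrite -sumrB; apply: eq_bigr => t _; rewrite -sumrB; apply: eq_bigr => i _.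
by rewrite !ffunE mulrBr mulrnBl.
Qed.

Lemma inP0 Vs E n : inP Vs E (0 : chain n).
Proof. by move=> t; rewrite ffunE eqxx. Qed.

Lemma Omega0 Vs E n : inOmega Vs E (0 : chain n).
Proof. by split; [|case: n => [|n] /=; rewrite ?bd0]; apply: inP0. Qed.

Lemma inPB Vs E n (a b : chain n) : inP Vs E a -> inP Vs E b -> inP Vs E (a - b).
Proof.
move=> Pa Pb t; rewrite chainBE; have [at0|/Pa //] := eqVneq (a t) 0.
by rewrite at0 sub0r oppr_eq0 => /Pb.
Qed.

Lemma bd_neq0_coface n (c : chain n.+1) (s : n.+1.-tuple V) : bd c s != 0 ->
  regular s /\ exists (t : n.+2.-tuple V) (i : 'I_n.+2),
    [/\ regular t, c t != 0 & delete_at i t = s].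
Proof.
rewrite ffunE; case: ifP => [reg_s|_] nz; last by rewrite eqxx in nz.
split=> //; pose coface (ti : n.+2.-tuple V * 'I_n.+2) :=
  [&& regular ti.1, c ti.1 != 0 & delete_at ti.2 ti.1 == s].
have [[t i] /and3P [reg_t ct /eqP dt] | none] := pickP coface; first by exists t, i.
case/eqP: nz; apply: big1 => t reg_t; apply: big1 => i _.
have [-> | ct] := eqVneq (c t) 0; first by rewrite mulr0 mul0rn.
by case: eqP => // dt; have := none (t, i); rewrite /coface /= reg_t ct dt eqxx.
Qed.

Lemma bd_one_coface n (c : chain n.+1) (s : n.+1.-tuple V)
    (t0 : n.+2.-tuple V) (j : 'I_n.+2) :
  regular s -> regular t0 -> delete_at j t0 = s ->
  (forall (t : n.+2.-tuple V) (i : 'I_n.+2), regular t -> c t != 0 ->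
      delete_at i t = s -> t = t0 /\ i = j) ->
  bd c s = (-1) ^+ j * c t0.
Proof.
move=> reg_s reg_t0 dt0 only_t0; rewrite ffunE reg_s (bigD1 t0) //=.
have no_other (t : n.+2.-tuple V) (i : 'I_n.+2) : regular t -> (t, i) != (t0, j) ->
    ((-1) ^+ i * c t) *+ (delete_at i t == s) = 0.
  move=> reg_t neq_ti; have [-> | ct] := eqVneq (c t) 0; first by rewrite mulr0 mul0rn.
  case: eqP => // dt.
  by case: (only_t0 _ _ reg_t ct dt) neq_ti => -> ->; rewrite eqxx.
rewrite (bigD1 j) //= dt0 eqxx mulr1n.
rewrite big1 ?addr0 => [|i neq_ij].
  rewrite big1 ?addr0 // => t /andP [reg_t neq_t].
  by apply: big1 => i _; rewrite no_other // xpair_eqE negb_and neq_t.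
by rewrite no_other // xpair_eqE negb_and neq_ij orbT.
Qed.

Lemma sum_regular_tuples_eq m (x : seq V) (a : R) :
  \sum_(t : m.-tuple V | regular t) a *+ (x == t) =
  if (size x == m) && regular x then a else 0.
Proof.
have [size_x|size_x] /= := eqVneq (size x) m; last first.
  by apply: big1 => t _; case: eqP => // xt; rewrite xt size_tuple eqxx in size_x.
case: ifP => reg_x; last first.
  by apply: big1 => t reg_t; case: eqP => // xt; rewrite xt reg_t in reg_x.
rewrite (bigD1 (Tuple (introT eqP size_x))) //= eqxx mulr1n big1 ?addr0 //.
move=> t /andP [_ neq_t].
by case: eqP => // xt; case/eqP: neq_t; apply: val_inj.
Qed.

Lemma bd_bd_uniq (c : chain 2) : (forall t, c t != 0 -> uniq t) -> bd (bd c) = 0.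
Proof.
move=> uniq_c; apply/ffunP => s; rewrite !ffunE; case: ifP => reg_s //.
have swap (i j : nat) (t t' : seq V) (a : R) :
    ((-1) ^+ j * (a *+ (delete_at i t == t'))) *+ (delete_at j t' == s) =
    (((-1) ^+ j * a) *+ (delete_at j (delete_at i t) == s)) *+ (delete_at i t == t').
  by case: eqP => [->|_]; rewrite ?mulr0n ?mulr0 ?mul0rn ?mulr1n.
under eq_bigr => t' reg_t' do under eq_bigr => j _ do
  rewrite ffunE reg_t' big_distrr -sumrMnl.
under eq_bigr => t' _ do under eq_bigr => j _ do under eq_bigr => t _ do
  rewrite big_distrr -sumrMnl.
under eq_bigr => t' _ do under eq_bigr => j _ do under eq_bigr => t _ do
  under eq_bigr => i _ do rewrite swap.
under eq_bigr => t' _ do rewrite exchange_big.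
rewrite exchange_big; apply: big1 => t _; rewrite exchange_big.
under eq_bigr => j _ do rewrite exchange_big.
under eq_bigr => j _ do under eq_bigr => i _ do rewrite sum_regular_tuples_eq.
have [-> | ct] := eqVneq (c t) 0.
  by apply: big1 => j _; apply: big1 => i _; case: ifP; rewrite ?mulr0 ?mul0rn.
have [a [b [d et]]] := exists_tuple3 t; subst t.
have /= := uniq_c _ ct; rewrite !inE negb_or => /andP [/andP [nab nad] /andP [nbd _]].
have [x ->] := exists_tuple1 s.
rewrite !big_ord_recr !big_ord0 /= /delete_at /= /regular /= nab nad nbd /=.
rewrite !expr0 !expr1 !mul1r.
case: (a == x); case: (b == x); case: (d == x); rewrite /= ?mulr0n ?mulr1n; ring.
Qed.

End Boundary.

Section Digraph.
Variables (R : comPzRingType) (V : finType) (E : rel V).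

Definition sole_detour (x v y : V) : Prop :=
  [/\ x != y, ~~ E x y & forall v', E x v' -> E v' y -> v' = v].

Lemma allowed_sorted Vs s : allowed Vs E s -> sorted E s.
Proof. by case/and3P. Qed.

Lemma delete_at_sole_detour x0 (s s' : seq V) i j :
  size s' = size s -> (i < size s')%N -> (0 < j)%N -> (j.+1 < size s)%N ->
  sorted E s' -> delete_at i s' = delete_at j s ->
  sole_detour (nth x0 s j.-1) (nth x0 s j) (nth x0 s j.+1) -> i = j /\ s' = s.
Proof.
move=> eq_size lt_i j_gt0 lt_j /(sortedP x0) path_s' eq_del [_ no_edge only_v].
have same m : nth x0 s' (if (m < i)%N then m else m.+1) =
              nth x0 s (if (m < j)%N then m else m.+1).
  by rewrite -!nth_delete_at eq_del.
have Sj1 : j.-1.+1 = j by rewrite prednK.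
have edge m : (m.+1 < size s')%N -> E (nth x0 s' m) (nth x0 s' m.+1) := path_s' m.
have [lt_ij|lt_ji|eq_ij] := ltngtP i j; last subst i.
- have [lt1 lt2] : (j.-1 < i)%N = false /\ (j < i)%N = false by lia.
  case/negP: no_edge; have := same j.-1; have := same j.
  rewrite lt1 lt2 ltnn (_ : j.-1 < j)%N ?Sj1; last by lia.
  by move=> <- <-; apply: edge; lia.
- have [lt1 lt2] : (j.-1 < i)%N /\ (j < i)%N by lia.
  case/negP: no_edge; have := same j.-1; have := same j.
  rewrite lt1 lt2 ltnn (_ : j.-1 < j)%N; last by lia.
  by move=> <- <-; have := edge j.-1; rewrite Sj1; apply; lia.
split=> //; apply: (eq_from_nth (x0 := x0) eq_size) => m lt_m.
have [lt_mj|lt_jm|->] := ltngtP m j.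
- by have := same m; rewrite lt_mj.
- case: m lt_jm lt_m => // m lt_jm lt_m.
  by have := same m; rewrite ltnNge -ltnS lt_jm.
have := same j.-1; have := same j; rewrite ltnn (_ : j.-1 < j)%N; last by lia.
move=> next prev; apply: only_v; rewrite -?next -?prev.
- by have := edge j.-1; rewrite Sj1; apply; lia.
- by apply: edge; lia.
Qed.

Hypothesis Eirr : irreflexive E.

Lemma edge_neq x y : E x y -> x != y.
Proof. by apply: contraTneq => ->; rewrite Eirr. Qed.

Lemma sorted_regular s : sorted E s -> regular s.
Proof. by apply: sub_sorted => x y /edge_neq. Qed.

Lemma Omega_sole_detour Vs n (c : chain R V n.+1) (t : n.+2.-tuple V) j x0 :
  inOmega Vs E c -> c t != 0 -> (0 < j)%N -> (j.+1 < n.+2)%N ->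
  ~ sole_detour (nth x0 t j.-1) (nth x0 t j) (nth x0 t j.+1).
Proof.
move=> [Pc Pbc] ct j_gt0 lt_j detour; have [neq_ends no_edge _] := detour.
have sorted_t := allowed_sorted (Pc _ ct).
have lt_j' : (j < n.+2)%N by exact: ltnW.
have size_s : size (delete_at j t) == n.+1 by rewrite size_delete_at ?size_tuple.
pose s := Tuple size_s.
have reg_s : regular s.
  by apply: (regular_delete_at (x0 := x0)); rewrite ?size_tuple ?sorted_regular.
have bd_s : bd c s = (-1) ^+ j * c t.
  apply: (bd_one_coface (j := Ordinal lt_j')) => // [|t' i _ ct' del_t'].
    exact: sorted_regular.
  have eq_size : size t' = size t by rewrite !size_tuple.
  have [lt_i lt_j''] : (i < size t')%N /\ (j.+1 < size t)%N by rewrite !size_tuple.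
  have [eq_ij eq_t'] := delete_at_sole_detour eq_size lt_i j_gt0 lt_j''
    (allowed_sorted (Pc _ ct')) del_t' detour.
  by split; apply: val_inj.
have bd_s_neq0 : bd c s != 0.
  by apply: contra_neq ct => bd_s0; rewrite -[c t](signrMK j) -bd_s bd_s0 mulr0.
have /Pbc/allowed_sorted/(sortedP x0)/(_ j.-1) := bd_s_neq0.
have lt_pj : (j.-1 < j)%N by rewrite prednK.
rewrite size_tuple /= !nth_delete_at lt_pj prednK // ltnn.
by move=> edge; case/negP: no_edge; apply: edge; lia.
Qed.

End Digraph.

Section Collapse.
Variables (R : comPzRingType) (Rr : realType) (V : finType).
Variables (E : rel V) (f : V -> Rr).
Hypothesis Eirr : irreflexive E.
Hypothesis deg1 : forall v, f v = 0 -> outdeg E v = 1%N /\ indeg E v = 1%N.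
Local Notation Z := (collapse_Z E f).
Local Notation GV := (collapse_V E f).
Local Notation GE := (collapse_E E f).
Local Notation chain := (chain R V).

Lemma zero_out_uniq v w w' : f v = 0 -> E v w -> E v w' -> w = w'.
Proof.
case/deg1 => /eq_leq/card_le1_eqP out_uniq _ evw evw'.
by apply: out_uniq; rewrite inE.
Qed.

Lemma zero_in_uniq v u u' : f v = 0 -> E u v -> E u' v -> u = u'.
Proof.
case/deg1 => _ /eq_leq/card_le1_eqP in_uniq euv eu'v.
by apply: in_uniq; rewrite inE.
Qed.

Lemma Z_zero v : Z v -> f v = 0.
Proof. by case/andP => /eqP. Qed.

Lemma Z_triangle v : Z v -> exists u w, [/\ E u v, E v w & E u w].
Proof. by case/andP => _ /existsP [u /existsP [w /and3P [*]]]; exists u, w. Qed.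

Lemma Z_bypass v x y : Z v -> E x v -> E v y -> E x y.
Proof.
move=> zv exv evy; have [u [w [euv evw euw]]] := Z_triangle zv.
by rewrite (zero_in_uniq (Z_zero zv) exv euv) (zero_out_uniq (Z_zero zv) evy evw).
Qed.

Lemma Z_in_notZ v x : Z v -> E x v -> ~~ Z x.
Proof.
move=> zv exv; apply/negP => zx; have [u [w [euv evw euw]]] := Z_triangle zv.
move: evw; rewrite (zero_in_uniq (Z_zero zv) euv exv) in euw *.
by rewrite (zero_out_uniq (Z_zero zx) euw exv) Eirr.
Qed.

Lemma Z_sole_detour_in x u v : Z v -> E x u -> E u v -> sole_detour E x u v.
Proof.
move=> zv exu euv; split.
- apply: contraTneq exu => ->; apply/negP => evu.
  by have := Z_bypass zv euv evu; rewrite Eirr.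
- by apply/negP => exv; move: exu; rewrite (zero_in_uniq (Z_zero zv) exv euv) Eirr.
- by move=> u' _ eu'v; apply: zero_in_uniq (Z_zero zv) eu'v euv.
Qed.

Lemma Z_sole_detour_out v w y : Z v -> E v w -> E w y -> sole_detour E v w y.
Proof.
move=> zv evw ewy; split.
- apply: contraTneq ewy => <-; apply/negP => ewv.
  by have := Z_bypass zv ewv evw; rewrite Eirr.
- by apply/negP => evy; move: ewy; rewrite (zero_out_uniq (Z_zero zv) evy evw) Eirr.
- by move=> w' evw' _; apply: zero_out_uniq (Z_zero zv) evw' evw.
Qed.

Lemma Z_index_Omega Vs n (c : chain n.+1) (t : n.+2.-tuple V) v :
  inOmega Vs E c -> c t != 0 -> Z v -> v \in (t : seq V) -> (n <= index v t <= 1)%N.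
Proof.
move=> Oc ct zv vt; have /(sortedP v) edge := allowed_sorted (Oc.1 _ ct).
have lt_k : (index v t < n.+2)%N by rewrite -[X in (_ < X)%N](size_tuple t) index_mem.
have := nth_index v vt; move: (index v t) lt_k => k lt_k tk.
rewrite size_tuple in edge.
apply/andP; split; rewrite leqNgt; apply/negP => lt_k'.
- apply: (Omega_sole_detour Eirr (j := k.+1) (x0 := v) Oc ct) => //=.
  rewrite tk; apply: Z_sole_detour_out => //; [rewrite -{1}tk |]; apply: edge; lia.
- have Pk : k.-1.+1 = k by lia.
  apply: (Omega_sole_detour Eirr (j := k.-1) (x0 := v) Oc ct); try lia.
  rewrite Pk tk; apply: Z_sole_detour_in => //.
  + by have := edge k.-2; rewrite (_ : k.-2.+1 = k.-1); [apply; lia | lia].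
  + by have := edge k.-1; rewrite Pk tk; apply; lia.
Qed.

Definition avoids_Z n (c : chain n) : Prop := forall t, c t != 0 -> all GV t.

Lemma avoids_Z_at n (c : chain n) (t : n.+1.-tuple V) v :
  avoids_Z c -> v \in (t : seq V) -> Z v -> c t = 0.
Proof.
move=> avc vt zv; apply/eqP; apply: contraT => /avc /allP /(_ v vt).
by rewrite /collapse_V /= zv.
Qed.

Lemma inP_collapse_avoids_Z n (c : chain n) : inP GV GE c -> avoids_Z c.
Proof. by move=> Pc t /Pc /and3P []. Qed.

Lemma allowed_collapse s : allowed predT E s -> all GV s -> allowed GV GE s.
Proof.
case/and3P => size_s _ sorted_s GVs; rewrite /allowed size_s GVs /=.
apply: (sub_in_sorted (P := GV)) GVs sorted_s => x y GVx GVy exy.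
by move: GVx GVy; rewrite /collapse_E exy !inE negb_or => -> ->.
Qed.

Lemma bd_avoids_Z n (c : chain n.+1) : avoids_Z c -> avoids_Z (bd c).
Proof.
move=> avc s /bd_neq0_coface [_ [t [i [_ /avc /allP GVt del_t]]]].
by apply/allP => x; rewrite -del_t => /mem_delete_at /GVt.
Qed.

Lemma Omega_collapse n (c : chain n) :
  inOmega predT E c -> avoids_Z c -> inOmega GV GE c.
Proof.
move=> [Pc Pbc] avc; split=> t ct.
  exact: allowed_collapse (Pc _ ct) (avc _ ct).
case: n c Pc Pbc avc t ct => [|n] c _ Pbc avc t ct; first by rewrite ffunE eqxx in ct.
exact: allowed_collapse (Pbc _ ct) (bd_avoids_Z avc ct).
Qed.

Lemma Omega_high_avoids_Z n (c : chain n.+3) : inOmega predT E c -> avoids_Z c.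
Proof.
move=> Oc t ct; apply/allP => v vt; apply/negP => zv.
by have /andP [le_n le_1] := Z_index_Omega Oc ct zv vt; have := leq_trans le_n le_1.
Qed.

Lemma Omega2_avoids_Z (c : chain 2) : inOmega predT E c ->
  (forall a v, Z v -> E a v -> bd c [tuple a; v] = 0) -> avoids_Z c.
Proof.
move=> Oc bd_c0 t ct; apply/allP => q qt; apply/negP => zq.
have middle (t' : 3.-tuple V) : c t' != 0 -> q \in (t' : seq V) ->
    exists p r, [/\ t' = [tuple p; q; r], E p q & E q r].
  move=> ct' qt'; have [p [q' [r et']]] := exists_tuple3 t'; subst t'.
  have /= /and3P [epq' eq'r _] := allowed_sorted (Oc.1 _ ct').
  have := Z_index_Omega Oc ct' zq qt'; rewrite /=; case: eqP => // _.
  by case: eqP => // <- _; exists p, r.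
have [p [r [et epq eqr]]] := middle t ct qt; subst t.
have bd_pq : bd c [tuple p; q] = (-1) ^+ 2 * c [tuple p; q; r].
  apply: (bd_one_coface (j := ord_max)) => //.
  - by rewrite /regular /= (edge_neq Eirr epq).
  - by rewrite /regular /= (edge_neq Eirr epq) (edge_neq Eirr eqr).
  move=> t' i _ ct' del_t'.
  have qt' : q \in (t' : seq V).
    by apply: (mem_delete_at (i := i)); rewrite del_t' !inE eqxx orbT.
  have [p' [r' [et' ep'q eqr']]] := middle t' ct' qt'; subst t'.
  rewrite (zero_out_uniq (Z_zero zq) eqr' eqr) in del_t' *.
  case: i del_t' => [[|[|[|//]]] lt_i] /=; rewrite /delete_at /=.
  - by case=> _ erq; move: eqr; rewrite erq Eirr.
  - by case=> _ erq; move: eqr; rewrite erq Eirr.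
  - by case=> ->; split; apply: val_inj.
by move: ct; rewrite -(signrMK 2 (c _)) -bd_pq bd_c0 // mulr0 eqxx.
Qed.

Definition cone n (c : chain n) : chain n.+1 :=
  [ffun t : n.+2.-tuple V => let s : n.+1.-tuple V := behead_tuple t in
     if Z (thead s) && E (thead t) (thead s) then c s else 0].

Lemma cone_cons n (c : chain n) x (s : n.+1.-tuple V) :
  cone c [tuple of x :: s] = if Z (thead s) && E x (thead s) then c s else 0.
Proof. by rewrite ffunE (_ : behead_tuple [tuple of x :: s] = s) //; apply: val_inj. Qed.

Lemma cone_neq0 n (c : chain n) x (s : n.+1.-tuple V) :
  cone c [tuple of x :: s] != 0 -> [/\ Z (thead s), E x (thead s) & c s != 0].
Proof. by rewrite cone_cons; case: ifP => [/andP [] | _]; rewrite ?eqxx. Qed.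

Lemma cone_inP n (c : chain n) : inP predT E c -> inP predT E (cone c).
Proof.
move=> Pc t; case/tupleP: t => x s /cone_neq0 [_ exs /Pc].
case/tupleP: s exs => y s /= exy /and3P [_ _ sorted_ys].
by rewrite /allowed /= exy all_predT.
Qed.

Lemma Omega_chain0 (c : chain 0) : inOmega predT E c.
Proof.
split=> t; last by rewrite ffunE eqxx.
by case/tupleP: t => x t; rewrite tuple0.
Qed.

Lemma cone_Omega1 (c : chain 0) : inOmega predT E (cone c).
Proof.
by split; [apply/cone_inP; case: (Omega_chain0 c) | case: (Omega_chain0 (bd (cone c)))].
Qed.

Lemma cone_Omega2 (c : chain 1) : inP predT E c -> inOmega predT E (cone c).
Proof.
move=> Pc; split; first exact: cone_inP.
move=> s /bd_neq0_coface [_ [t [i [_ ct <-]]]].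
have [x [y [z et]]] := exists_tuple3 t; subst t.
have [zy exy /Pc] := cone_neq0 ct; rewrite /allowed /= andbT => eyz.
have exz := Z_bypass zy exy eyz.
by case: i => [[|[|[|//]]] lt_i]; rewrite /delete_at /allowed /= ?exy ?eyz ?exz.
Qed.

Lemma bd_bd_cone (c : chain 1) : inP predT E c -> bd (bd (cone c)) = 0.
Proof.
move=> Pc; apply: bd_bd_uniq => t; have [x [y [z ->]]] := exists_tuple3 t.
case/cone_neq0 => zy exy /Pc; rewrite /allowed /= andbT => eyz.
by rewrite /= !inE negb_or !(edge_neq Eirr) ?(Z_bypass zy exy eyz).
Qed.

Lemma bd_cone_Z n (c : chain n) (s : n.+1.-tuple V) :
  Z (thead s) -> regular s -> bd (cone c) s = c s.
Proof.
case/tupleP: s => y s /= zy reg_ys; have [u [_ [euy _ _]]] := Z_triangle zy.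
rewrite (bd_one_coface (t0 := [tuple of u :: [tuple of y :: s]]) (j := ord0)) //.
- by rewrite expr0 mul1r cone_cons /= zy euy.
- by rewrite /regular /= (edge_neq Eirr euy).
move=> t i _; case/tupleP: t => x t /cone_neq0 [zt ext _].
case: i => [[|i] lt_i] /=.
- rewrite delete_at0 => /val_inj et; subst t.
  by rewrite (zero_in_uniq (Z_zero zy) ext euy); split; last apply: val_inj.
- rewrite delete_atS => -[exy _]; subst x.
  by have := Z_in_notZ zt ext; rewrite zy.
Qed.

Lemma cone_correction0 (z : chain 0) : avoids_Z (z - bd (cone z)).
Proof.
move=> t; have [a ->] := exists_tuple1 t; rewrite chainBE.
apply: contraR; rewrite /= andbT /collapse_V /= negbK => za.
by rewrite bd_cone_Z ?subrr.
Qed.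

Lemma bd_chain1_at_Z (d : chain 1) a b : inP predT E d -> Z b -> E a b ->
  (forall w, d [tuple b; w] = 0) -> bd d [tuple b] = d [tuple a; b].
Proof.
move=> Pd zb eab d_b0.
rewrite (bd_one_coface (t0 := [tuple a; b]) (j := ord0)) ?expr0 ?mul1r //.
  by rewrite /regular /= (edge_neq Eirr eab).
move=> t i _ dt; have [x [y et]] := exists_tuple2 t; subst t.
case: i => [[|[|//]] lt_i] /=; rewrite /delete_at /= => -[e].
- subst y; have /allowed_sorted /= /andP [exb _] := Pd _ dt.
  by rewrite (zero_in_uniq (Z_zero zb) exb eab); split; last apply: val_inj.
- by subst x; rewrite d_b0 eqxx in dt.
Qed.

Lemma cone_correction1 (c : chain 1) : inOmega predT E c ->
  (forall b, Z b -> bd c [tuple b] = 0) ->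
  [/\ inOmega predT E (c - bd (cone c)), bd (c - bd (cone c)) = bd c
    & avoids_Z (c - bd (cone c))].
Proof.
move=> [Pc Pbc] bd_c0; set c' := c - bd (cone c).
have Pc' : inP predT E c' := inPB Pc (cone_Omega2 Pc).2.
have bd_c' : bd c' = bd c by rewrite bdB bd_bd_cone // subr0.
have c'_Z b w : Z b -> c' [tuple b; w] = 0.
  move=> zb; apply/eqP; apply: contraT => nz.
  have reg := sorted_regular Eirr (allowed_sorted (Pc' _ nz)).
  by move: nz; rewrite chainBE bd_cone_Z // subrr eqxx.
split=> //; first by split; rewrite //= bd_c'.
move=> t; have [a [b ->]] := exists_tuple2 t => nz.
have /allowed_sorted /= /andP [eab _] := Pc' _ nz.
rewrite /= andbT /collapse_V /=; apply/andP; split; apply: contraTN nz => zx.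
- by rewrite negbK c'_Z.
- rewrite negbK -(bd_chain1_at_Z Pc' zx eab) => [|w]; last exact: c'_Z.
  by rewrite bd_c' bd_c0.
Qed.

Lemma collapse_iso_H0 : inclusion_iso_Hn R GV GE predT E 0.
Proof.
split=> [z _ _ | z' w [Pz' _] _ Ow e]; last subst z'.
- exists (z - bd (cone z)), (cone z); split=> //; last by rewrite subrK.
  + by apply: Omega_collapse; [apply: Omega_chain0 | apply: cone_correction0].
  + exact: cone_Omega1.
- have bd_w0 b : Z b -> bd w [tuple b] = 0.
    by move=> zb; apply: avoids_Z_at (inP_collapse_avoids_Z Pz') _ zb; rewrite inE.
  have [Ow' bd_w' av_w'] := cone_correction1 Ow bd_w0.
  by exists (w - bd (cone w)); split; [exact: Omega_collapse | rewrite bd_w'].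
Qed.

Lemma collapse_iso_H1 : inclusion_iso_Hn R GV GE predT E 1.
Proof.
split=> [z Oz bd_z0 | z' w [Pz' _] _ Ow e]; last subst z'.
- have bd_zZ b : Z b -> bd z [tuple b] = 0 by rewrite [bd z]bd_z0 ffunE.
  have [Oz' bd_z' av_z'] := cone_correction1 Oz bd_zZ.
  exists (z - bd (cone z)), (cone z); split.
  + exact: Omega_collapse.
  + by rewrite /= bd_z'.
  + exact: cone_Omega2 Oz.1.
  + by rewrite subrK.
- exists w; split=> //; apply: Omega_collapse Ow (Omega2_avoids_Z Ow _).
  move=> a v zv _; apply: avoids_Z_at (inP_collapse_avoids_Z Pz') _ zv.
  by rewrite !inE eqxx orbT.
Qed.

Lemma collapse_iso_of_avoids_Z n :
  (forall z : chain n, inOmega predT E z -> bdn z = 0 -> avoids_Z z) ->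
  (forall w : chain n.+1, inOmega predT E w -> avoids_Z w) ->
  inclusion_iso_Hn R GV GE predT E n.
Proof.
move=> av_cycles av_Omega; split=> [z Oz bd_z0 | z' w _ _ Ow ->].
- exists z, 0; rewrite bd0 addr0; split=> //; last exact: Omega0.
  exact: Omega_collapse (av_cycles _ Oz bd_z0).
- by exists w; split=> //; exact: Omega_collapse (av_Omega _ Ow).
Qed.

Lemma collapse_iso_ge2 n : inclusion_iso_Hn R GV GE predT E n.+2.
Proof.
apply: collapse_iso_of_avoids_Z => [z Oz bd_z0 | w]; last exact: Omega_high_avoids_Z.
case: n z Oz bd_z0 => [|n] z Oz bd_z0; last exact: Omega_high_avoids_Z.
by apply: Omega2_avoids_Z => // a v _ _; rewrite [bd z]bd_z0 ffunE.
Qed.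

End Collapse.

Unset Implicit Arguments.

Theorem theorem1p2 (R : comPzRingType) (Rr : realType) (V : finType)
    (E : rel V) (f : V -> Rr) :
  irreflexive E ->
  discrete_Morse E f ->
  (forall v, f v = 0 -> outdeg E v = 1%N /\ indeg E v = 1%N) ->
  forall n : nat,
    inclusion_iso_Hn R (collapse_V E f) (collapse_E E f) predT E n.
Proof.
move=> Eirr _ deg1 [|[|n]].
- exact: collapse_iso_H0.
- exact: collapse_iso_H1.
- exact: collapse_iso_ge2.
Qed.
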